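(* Let $d\le 4$ and let $A=(A_1,\dots,A_d)$ have a palindromic Ising model distribution on $\{0,1\}^d$. Then for every nonempty subset $M\subseteq\{1,\dots,d\}$, the marginal distribution of $(A_v)_{v\in M}$ is again a palindromic Ising model.
   Context: A distribution $p$ on $\{0,1\}^k$ with $p(a)>0$ for all $a$ is palindromic if $p(a)=p(\sim a)$ for all $a$, where $\sim a$ is the complement of $a$. Its log-linear interactions (effect coding) are $\lambda_b=2^{-k}\sum_{a}(-1)^{a\cdot b}\log p(a)$ for $b\in\{0,1\}^k$. It is an Ising model if $\lambda_b=0$ for all $b$ with $|b|=\sum_v b_v\ge3$, and a palindromic Ising model if it is both an Ising model and palindromic (equivalently an Ising model with uniform margins). *)

From HB Require Import structures.
From mathcomp Require Import all_boot all_order all_algebra.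
From mathcomp Require Import reals exp.
Set Implicit Arguments. Unset Strict Implicit. Unset Printing Implicit Defensive.
Import Order.TTheory GRing.Theory Num.Theory.
Local Open Scope ring_scope.

Definition config (T : finType) := {ffun T -> bool}.

Definition compl_config (T : finType) (a : {ffun T -> bool}) : {ffun T -> bool} :=
  [ffun v => ~~ a v].

Definition dotc (T : finType) (a b : {ffun T -> bool}) : nat :=
  (\sum_(v : T) ((a v && b v) : nat))%N.

Definition weight (T : finType) (b : {ffun T -> bool}) : nat :=
  (\sum_(v : T) (b v : nat))%N.

Definition pos_dist (R : realType) (T : finType) (p : {ffun T -> bool} -> R) : Prop :=
  (forall a, 0 < p a) /\ \sum_(a : {ffun T -> bool}) p a = 1.

Definition palindromic (R : realType) (T : finType) (p : {ffun T -> bool} -> R) : Prop :=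
  forall a, p a = p (compl_config a).

(* log-linear interactions (effect coding) *)
Definition interaction (R : realType) (T : finType) (p : {ffun T -> bool} -> R)
  (b : {ffun T -> bool}) : R :=
  (2 ^- #|T|) * \sum_(a : {ffun T -> bool}) (-1) ^+ (dotc a b) * ln (p a).

Definition ising (R : realType) (T : finType) (p : {ffun T -> bool} -> R) : Prop :=
  forall b : {ffun T -> bool}, (3 <= weight b)%N -> interaction p b = 0.

Definition palindromic_ising (R : realType) (T : finType) (p : {ffun T -> bool} -> R) : Prop :=
  [/\ pos_dist p, palindromic p & ising p].

Definition marginal (R : realType) (T : finType) (p : {ffun T -> bool} -> R) (M : {set T})
  (c : {ffun {v : T | v \in M} -> bool}) : R :=
  \sum_(a : {ffun T -> bool} | [forall v : {v : T | v \in M}, a (val v) == c v]) p a.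
Arguments marginal {R T} p M c.

From HB Require Import structures.
From mathcomp Require Import all_boot all_order all_algebra.
From mathcomp Require Import reals exp.
Set Implicit Arguments. Unset Strict Implicit. Unset Printing Implicit Defensive.
Import Order.TTheory GRing.Theory Num.Theory.
Local Open Scope ring_scope.

(* Complementation reverses the sign of every interaction of odd order, so a
   palindromic distribution has only even-order interactions.  Marginalising
   keeps positivity, normalisation and palindromy; hence the only interaction
   that could fail to vanish is one of even order >= 3 on at most four
   variables, i.e. the order-4 interaction of the full marginal.  That marginal
   is the distribution itself up to relabelling, so the Ising property of [p]
   applies. *)

Section Interactions.
Variables (R : realType) (T : finType).
Implicit Types (q : {ffun T -> bool} -> R) (a b : {ffun T -> bool}).

Lemma compl_configK : involutive (@compl_config T).
Proof. by move=> a; apply/ffunP => v; rewrite !ffunE negbK. Qed.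

Lemma dotc_compl a b : (dotc (compl_config a) b + dotc a b)%N = weight b.
Proof.
rewrite /dotc /weight -big_split /=; apply: eq_bigr => v _.
by rewrite ffunE; case: (a v); case: (b v).
Qed.

Lemma sign_dotc_compl a b :
  (-1) ^+ dotc (compl_config a) b = (-1) ^+ weight b * (-1) ^+ dotc a b :> R.
Proof.
by rewrite -(dotc_compl a b) exprD -mulrA -expr2 sqrr_sign mulr1.
Qed.

Lemma interaction_odd q b :
  palindromic q -> odd (weight b) -> interaction q b = 0.
Proof.
move=> palq oddb; rewrite /interaction.
set S := \sum_a _.
have S_opp : S = - S.
  rewrite {1}/S (reindex_inj (can_inj compl_configK)) -sumrN.
  apply: eq_bigr => a _.
  by rewrite -palq sign_dotc_compl -signr_odd oddb expr1 mulN1r mulNr.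
suff -> : S = 0 by rewrite mulr0.
by apply/eqP; rewrite -[S == 0](mulrn_eq0 _ 2) mulr2n {2}S_opp subrr.
Qed.

Lemma weight_le_card b : (weight b <= #|T|)%N.
Proof. by rewrite /weight -sum1_card; apply: leq_sum => v _; apply: leq_b1. Qed.

End Interactions.

Section Marginals.
Variables (R : realType) (T : finType).
Implicit Types (q : {ffun T -> bool} -> R) (a : {ffun T -> bool}) (M : {set T}).

Definition restr M a : {ffun {v : T | v \in M} -> bool} := [ffun v => a (val v)].

Lemma restrP M a (c : {ffun {v : T | v \in M} -> bool}) :
  [forall v : {v : T | v \in M}, a (val v) == c v] = (c == restr M a).
Proof.
apply/forallP/eqP => [eq_ac | ->]; last by move=> v; rewrite ffunE.
by apply/ffunP => v; rewrite ffunE; apply/esym/eqP.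
Qed.

Lemma marginal_sum q M : \sum_c marginal q M c = \sum_a q a.
Proof.
rewrite /marginal (eq_bigr _ (fun c _ => big_mkcond _ _)) exchange_big /=.
apply: eq_bigr => a _; rewrite -big_mkcond /=.
by rewrite (big_pred1 (restr M a)) // => c; rewrite /= restrP.
Qed.

Lemma marginal_gt0 q M c : (forall a, 0 < q a) -> 0 < marginal q M c.
Proof.
move=> q_gt0.
pose a0 : {ffun T -> bool} := [ffun i => if insub i is Some v then c v else false].
have a0_c : [forall v : {v : T | v \in M}, a0 (val v) == c v].
  by apply/forallP => v; rewrite ffunE valK.
rewrite /marginal (bigD1 a0) //=.
by apply: ltr_pwDl; [apply: q_gt0 | apply: sumr_ge0 => a _; apply: ltW].
Qed.

Lemma marginal_pos_dist q M : pos_dist q -> pos_dist (marginal q M).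
Proof.
case=> q_gt0 q_sum1; split; last by rewrite marginal_sum.
by move=> c; apply: marginal_gt0.
Qed.

Lemma marginal_palindromic q M : palindromic q -> palindromic (marginal q M).
Proof.
move=> palq c; rewrite /marginal (reindex_inj (can_inj (@compl_configK T))).
apply: eq_big => [a | a _]; last by rewrite -palq.
by apply: eq_forallb => v; rewrite !ffunE (can2_eq negbK negbK).
Qed.

Lemma card_sig_le M : (#|{: {v : T | v \in M}}| <= #|T|)%N.
Proof. by rewrite card_sig max_card. Qed.

Lemma card_sig_setT M : (#|T| <= #|{: {v : T | v \in M}}|)%N -> M = [set: T].
Proof.
rewrite card_sig -cardsT => cardM; apply/eqP.
by rewrite eqEcard subsetT cardM.
Qed.

Definition in_setT_sig (i : T) : {v : T | v \in [set: T]} := exist _ i (in_setT i).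

Definition pull_setT (b : {ffun {v : T | v \in [set: T]} -> bool}) : {ffun T -> bool} :=
  [ffun i => b (in_setT_sig i)].

Lemma restr_setTK : cancel (restr [set: T]) pull_setT.
Proof. by move=> a; apply/ffunP => i; rewrite !ffunE. Qed.

Lemma pull_setTK : cancel pull_setT (restr [set: T]).
Proof. by move=> c; apply/ffunP => v; rewrite !ffunE; congr (c _); apply: val_inj. Qed.

Lemma sum_setT_sig (f : T -> nat) :
  (\sum_(v : {v : T | v \in [set: T]}) f (val v) = \sum_i f i)%N.
Proof.
by rewrite (reindex in_setT_sig) //; exists val => [i _ | v _] //; apply: val_inj.
Qed.

Lemma weight_pull_setT b : weight (pull_setT b) = weight b.
Proof.
rewrite /weight -(sum_setT_sig (fun i => (pull_setT b i : nat))).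
by apply: eq_bigr => v _; rewrite ffunE; congr (b _ : nat); apply: val_inj.
Qed.

Lemma marginal_setT q a : marginal q [set: T] (restr [set: T] a) = q a.
Proof.
rewrite /marginal (big_pred1 a) // => x; rewrite /= restrP.
by apply/eqP/eqP => [/(can_inj restr_setTK) | ->].
Qed.

Lemma interaction_marginal_setT q b :
  interaction (marginal q [set: T]) b = interaction q (pull_setT b).
Proof.
rewrite /interaction card_sig cardsT (reindex (restr [set: T])); last first.
  by exists pull_setT => [a _ | c _]; [apply: restr_setTK | apply: pull_setTK].
congr (_ * _); apply: eq_bigr => a _; rewrite marginal_setT; congr (_ ^+ _ * _).
rewrite /dotc -sum_setT_sig; apply: eq_bigr => v _; rewrite !ffunE.
by congr ((a _ && b _) : nat); apply: val_inj.
Qed.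

End Marginals.

Theorem proposition5p2 (R : realType) (d : nat) (p : {ffun 'I_d -> bool} -> R) :
  (d <= 4)%N ->
  palindromic_ising p ->
  forall M : {set 'I_d}, M != set0 ->
  palindromic_ising (marginal p M).
Proof.
move=> d_le4 [pdist_p pal_p ising_p] M _.
have pal_pM : palindromic (marginal p M) by apply: marginal_palindromic.
split=> //; first exact: marginal_pos_dist.
move=> b wb_ge3.
have [odd_wb | even_wb] := boolP (odd (weight b)); first exact: interaction_odd.
have cardM_le4 : (#|{: {v : 'I_d | v \in M}}| <= 4)%N.
  by apply: leq_trans (card_sig_le M) _; rewrite card_ord.
have wb4 : weight b = 4%N.
  move: wb_ge3 even_wb (leq_trans (weight_le_card b) cardM_le4).
  by case: (weight b) => [|[|[|[|[|w]]]]].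
have M_full : M = [set: 'I_d].
  apply: card_sig_setT; rewrite card_ord; apply: leq_trans d_le4 _.
  by rewrite -wb4; apply: weight_le_card.
subst M; rewrite interaction_marginal_setT; apply: ising_p.
by rewrite weight_pull_setT wb4.
Qed.
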